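(* Let $\mathcal L:\mathbb R^n\to(-\infty,\infty]$ be proper and lower semicontinuous. (i) Let $B\in\mathbb R^{r\times n}$, $b\in\mathbb R^r$, $\lambda\in\mathbb R^r$ with $\lambda>0$ componentwise, and $\Phi_\lambda\in\{\Phi_{0,\lambda},\Phi_{+,\lambda}\}$. If $\mathcal L$ is ALS, then $H(x):=\mathcal L(x)+\Phi_\lambda(Bx-b)$ is ALS. (ii) Suppose in addition that $\mathcal L$ is convex and ALS, that $C\subseteq\mathbb R^n$ is a polyhedral convex set, and that $\operatorname{dom}\mathcal L\cap C\neq\emptyset$. Then $U(x):=\mathcal L(x)+\delta(x\mid C)$ is ALS.
   Context: For $u\in\mathbb R^r$ and $\lambda\in\mathbb R^r$, $\lambda>0$: $\Phi_{0,\lambda}(u)=\sum_{i=1}^r\lambda_i\mathbf 1_{\{u_i\neq0\}}$ and $\Phi_{+,\lambda}(u)=\sum_{i=1}^r\lambda_i\mathbf 1_{\{u_i>0\}}$. $\delta(x\mid C)$ is $0$ if $x\in C$ and $+\infty$ otherwise. For a proper lsc $\psi:\mathbb R^n\to(-\infty,\infty]$, its asymptotic function is $\psi_\infty(d)=\liminf_{\tilde d\to d,\ t\to+\infty}\psi(t\tilde d)/t$ and $\operatorname{Ker}\psi_\infty=\{d:\psi_\infty(d)=0\}$; $\operatorname{lev}(\psi,\tau)=\{x:\psi(x)\le\tau\}$. $\psi$ is called asymptotically level stable (ALS) if for each $\rho>0$, each bounded sequence of reals $\{\tau_k\}$ and each sequence $\{x^k\}$ with $x^k\in\operatorname{lev}(\psi,\tau_k)$,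 $\|x^k\|\to\infty$, $x^k/\|x^k\|\to\bar x\in\operatorname{Ker}\psi_\infty$, there is $k_0$ with $x^k-\rho\bar x\in\operatorname{lev}(\psi,\tau_k)$ for all $k\ge k_0$. *)

From HB Require Import structures.
From mathcomp Require Import all_boot all_order all_algebra.
From mathcomp Require Import all_classical all_reals all_analysis.
Set Implicit Arguments. Unset Strict Implicit. Unset Printing Implicit Defensive.
Import Order.TTheory GRing.Theory Num.Theory.
Import numFieldNormedType.Exports.
Local Open Scope classical_set_scope.
Local Open Scope ring_scope.

Definition enorm (R : realType) (n : nat) (x : 'cV[R]_n) : R :=
  Num.sqrt (\sum_(i < n) x i 0 ^+ 2).

Definition proper_fun (R : realType) (n : nat) (f : 'cV[R]_n -> \bar R) : Prop :=
  (forall x, f x <> -oo%E) /\ (exists x, f x <> +oo%E).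

Definition edom (R : realType) (n : nat) (f : 'cV[R]_n -> \bar R) : set 'cV[R]_n :=
  [set x | (f x < +oo)%E].

Definition lev (R : realType) (n : nat) (f : 'cV[R]_n -> \bar R) (tau : R) : set 'cV[R]_n :=
  [set x | (f x <= tau%:E)%E].

(* asymptotic function:
   f_oo(d) = liminf_{d' -> d, t -> +oo} f (t d') / t *)
Definition asymptotic_fun (R : realType) (n : nat) (f : 'cV[R]_n -> \bar R)
  (d : 'cV[R]_n) : \bar R :=
  limf_einf (fun p : 'cV[R]_n * R => (f (p.2 *: p.1) * (p.2^-1)%:E)%E)
    (filter_prod (nbhs d) (@pinfty_nbhs R)).

Definition asymptotic_kernel (R : realType) (n : nat) (f : 'cV[R]_n -> \bar R)
  : set 'cV[R]_n := [set d | asymptotic_fun f d = 0%E].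

Definition ALS (R : realType) (n : nat) (f : 'cV[R]_n -> \bar R) : Prop :=
  forall (rho : R), 0 < rho ->
  forall (tau : nat -> R) (x : nat -> 'cV[R]_n) (xbar : 'cV[R]_n),
    (exists M : R, forall k, `|tau k| <= M) ->
    (forall k, lev f (tau k) (x k)) ->
    (fun k => enorm (x k)) @ \oo --> +oo ->
    (fun k => (enorm (x k))^-1 *: x k) @ \oo --> xbar ->
    asymptotic_kernel f xbar ->
    exists k0 : nat, forall k, (k0 <= k)%N -> lev f (tau k) (x k - rho *: xbar).

Definition Phi0 (R : realType) (r : nat) (lam : 'cV[R]_r) (u : 'cV[R]_r) : R :=
  \sum_(i < r) (if u i 0 != 0 then lam i 0 else 0).

Definition Phiplus (R : realType) (r : nat) (lam : 'cV[R]_r) (u : 'cV[R]_r) : R :=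
  \sum_(i < r) (if 0 < u i 0 then lam i 0 else 0).

Definition indicator_fun (R : realType) (n : nat) (C : set 'cV[R]_n) (x : 'cV[R]_n)
  : \bar R := if `[< C x >] then 0%E else +oo%E.

Definition convex_efun (R : realType) (n : nat) (f : 'cV[R]_n -> \bar R) : Prop :=
  forall (x y : 'cV[R]_n) (t : R), 0 < t < 1 ->
    (f (t *: x + (1 - t) *: y)%R <= t%:E * f x + (1 - t)%:E * f y)%E.

Definition polyhedral (R : realType) (n : nat) (C : set 'cV[R]_n) : Prop :=
  exists (m : nat) (A : 'M[R]_(m, n)) (a : 'cV[R]_m),
    C = [set x | forall i : 'I_m, (A *m x) i 0 <= a i 0].

From HB Require Import structures.
From mathcomp Require Import all_boot all_order all_algebra.
From mathcomp Require Import all_classical all_reals all_analysis.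
From mathcomp Require Import ring lra.
Set Implicit Arguments. Unset Strict Implicit. Unset Printing Implicit Defensive.
Import Order.TTheory GRing.Theory Num.Theory.
Import numFieldNormedType.Exports.
Local Open Scope classical_set_scope.
Local Open Scope ring_scope.

(* Let x^k lie in level sets of the sum at bounded heights, escaping to infinity in
   the direction xb of the kernel of the sum's asymptotic function.  The added term
   is bounded above along x^k (Phi is bounded, the indicator vanishes on C), so the
   x^k also lie in bounded level sets of L and L_oo(xb) <= 0.  Conversely
   L_oo(xb) < 0 is impossible: in (i) the sum differs from L by a bounded function,
   so its asymptotic function would be negative too; in (ii) convexity and lower
   semicontinuity make L decrease linearly along the ray z + s xb from a point z of
   dom L /\ C, and this ray stays in C = {Ax <= a} because A xb <= 0.  So ALS of L
   applies to x^k - rho xb.  It remains that the added term is eventually unchanged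
   by the shift: (B x^k)_i grows like |x^k| (B xb)_i, so when (B xb)_i <> 0 both
   (B x^k - b)_i and (B (x^k - rho xb) - b)_i eventually have its sign, while the
   shift does nothing when (B xb)_i = 0; similarly A (x^k - rho xb) <= a
   eventually. *)

Section limf_einf_bounds.
Context {R : realType} {U : choiceType} {T : filteredType U} (F : set_system T)
  (g : T -> \bar R).
Local Open Scope ereal_scope.

Lemma limf_einf_le (c : \bar R) :
  (forall V, F V -> exists2 p, V p & g p <= c) -> limf_einf g F <= c.
Proof.
move=> gc; rewrite limf_einfE; apply: ge_ereal_sup => _ [V FV <-].
have [p Vp gpc] := gc V FV; apply: ge_ereal_inf; exists (g p) => //; by exists p.
Qed.

Lemma limf_einf_lt0 :
  limf_einf g F < 0 ->
  exists2 e : R, (0 < e)%R & forall V, F V -> exists2 p, V p & g p < (- e)%:E.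
Proof.
move=> lt0.
have [e e0 lte] : exists2 e : R, (0 < e)%R & limf_einf g F < (- e)%:E.
  move: lt0; case: (limf_einf g F) => [r| |] //= r0.
    by rewrite lte_fin in r0; exists (- r / 2)%R; rewrite ?lte_fin; lra.
  by exists 1%R; rewrite ?ltNye.
exists e => // V FV.
have : ereal_inf (g @` V) < (- e)%:E.
  by apply: le_lt_trans lte; rewrite limf_einfE; apply: ereal_sup_ubound; exists V.
by move=> /ereal_inf_lt [_ [p Vp <-]]; exists p.
Qed.

End limf_einf_bounds.

Section scaled_limits.
Context {R : realType} {T : Type} (G : set_system T) {PG : ProperFilter G}.

Lemma scaled_cvg_gt0_cvgry (u N : T -> R) (c : R) : 0 < c ->
  N @ G --> +oo -> (fun k => (N k)^-1 * u k) @ G --> c -> u @ G --> +oo.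
Proof.
move=> c0 Ny uNc; apply/cvgryPgt => A.
have c2 : c / 2 < c by lra.
have [q_gt N_gt] := (cvgr_gt c uNc _ c2, cvgry_gt Ny (2 * `|A| / c)).
near=> k.
have qk : c / 2 < (N k)^-1 * u k by near: k.
have Nk : 2 * `|A| / c < N k by near: k.
have Nk0 : 0 < N k by apply: le_lt_trans Nk; rewrite divr_ge0 // ?mulr_ge0 // ltW.
have -> : u k = N k * ((N k)^-1 * u k) by rewrite mulrA mulfV ?gt_eqF // mul1r.
have cN : 2 * `|A| < N k * c by rewrite -ltr_pdivrMr.
have := ler_norm A; nra.
Unshelve. all: by end_near.
Qed.

Lemma scaled_cvg_lt0_cvgrNy (u N : T -> R) (c : R) : c < 0 ->
  N @ G --> +oo -> (fun k => (N k)^-1 * u k) @ G --> c -> u @ G --> -oo.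
Proof.
move=> c0 Ny uNc; apply/cvgNry; apply: (@scaled_cvg_gt0_cvgry _ N (- c)) => //.
  by rewrite oppr_gt0.
by under eq_fun do rewrite mulrN; exact: cvgN.
Qed.

Variables (u N : T -> R) (c : R).
Hypothesis Ny : N @ G --> +oo.
Hypothesis uNc : (fun k => (N k)^-1 * u k) @ G --> c.

Lemma scaled_cvg_sg_shift (rho beta : R) :
  \forall k \near G, Num.sg (u k - rho * c - beta) = Num.sg (u k - beta).
Proof.
have [c0|c0|->] := ltgtP c 0; last by near=> k; rewrite mulr0 subr0.
- have uNy := cvgrNy_lt (scaled_cvg_lt0_cvgrNy c0 Ny uNc).
  near=> k.
  have [uk1 uk2] : u k < beta + rho * c /\ u k < beta by split; near: k; exact: uNy.
  by rewrite !ltr0_sg //; lra.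
- have uy := cvgry_gt (scaled_cvg_gt0_cvgry c0 Ny uNc).
  near=> k.
  have [uk1 uk2] : beta + rho * c < u k /\ beta < u k by split; near: k; exact: uy.
  by rewrite !gtr0_sg //; lra.
Unshelve. all: by end_near.
Qed.

Lemma scaled_cvg_le0 (a : R) : (\forall k \near G, u k <= a) -> c <= 0.
Proof.
move=> ua; rewrite leNgt; apply/negP => c0.
have [k [uka ak]] :=
  filter_ex (filterI ua (cvgry_gt (scaled_cvg_gt0_cvgry c0 Ny uNc) a)).
by move: ak; rewrite ltNge uka.
Qed.

Lemma scaled_cvg_le_shift (a rho : R) :
  (\forall k \near G, u k <= a) -> \forall k \near G, u k - rho * c <= a.
Proof.
move=> ua; have := scaled_cvg_le0 ua; rewrite le_eqVlt => /orP[/eqP->|c0].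
  by apply: filterS ua => k; rewrite mulr0 subr0.
apply: filterS (cvgrNy_lt (scaled_cvg_lt0_cvgrNy c0 Ny uNc) (a + rho * c)).
by move=> k; lra.
Qed.

End scaled_limits.

Lemma cvgry_inv0 {R : realType} {T : Type} (G : set_system T) {FG : Filter G}
    (t : T -> R) :
  t @ G --> +oo -> (fun s => (t s)^-1) @ G --> 0.
Proof. by move=> ty; apply/gtr0_cvgV0 => //; exact: cvgry_gt ty 0. Qed.

Lemma cvg_mulmx_coord {R : realType} {T : Type} (G : set_system T) {FG : Filter G}
    (r n : nat) (B : 'M[R]_(r, n)) (y : T -> 'cV[R]_n) (d : 'cV[R]_n) (i : 'I_r) :
  y @ G --> d -> (fun t => (B *m y t) i 0) @ G --> (B *m d) i 0.
Proof.
move=> yd.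
have -> : (fun t => (B *m y t) i 0) = (fun t => \sum_j B i j * y t j 0).
  by apply: funext => t; rewrite mxE.
have -> : (B *m d) i 0 = \sum_j B i j * d j 0 by rewrite mxE.
apply: (cvg_big add_continuous) => // j _.
by apply: cvgM; [exact: cvg_cst | exact: cvg_comp yd (@coord_continuous R n 1 j 0 d)].
Qed.

Section asymptotic_fun_bounds.
Context {R : realType} {n : nat}.
Implicit Types (f g : 'cV[R]_n -> \bar R) (d z : 'cV[R]_n).

Lemma asymptotic_fun_le0 {T : Type} (G : set_system T) {PG : ProperFilter G}
    f (x : T -> 'cV[R]_n) (N : T -> R) d (M : R) :
  (forall k, (f (x k) <= M%:E)%E) -> N @ G --> +oo ->
  (fun k => (N k)^-1 *: x k) @ G --> d -> (asymptotic_fun f d <= 0)%E.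
Proof.
move=> fM Ny xd; apply/lee_addgt0Pr => e e0; rewrite add0e.
apply: limf_einf_le => V FV.
have Vx : \forall k \near G, V ((N k)^-1 *: x k, N k)
  by apply: (cvg_pair xd Ny).
have [k [Vk Nk]] := filter_ex (filterI Vx (cvgry_gt Ny (`|M| / e))).
exists ((N k)^-1 *: x k, N k) => //=.
have Nk0 : (0 < N k)%R by apply: le_lt_trans Nk; rewrite divr_ge0 // ltW.
rewrite scalerA mulfV ?gt_eqF // scale1r.
apply: le_trans (lee_wpmul2r _ (fM k)) _; first by rewrite lee_fin invr_ge0 ltW.
rewrite -EFinM lee_fin ler_pdivrMr //.
have := ler_norm M; rewrite ltr_pdivrMr // in Nk; nra.
Qed.

Lemma asymptotic_kernel_escape {T : Type} (G : set_system T) {PG : ProperFilter G}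
    f (x : T -> 'cV[R]_n) (N : T -> R) d (M : R) :
  (forall k, (f (x k) <= M%:E)%E) -> N @ G --> +oo ->
  (fun k => (N k)^-1 *: x k) @ G --> d -> ~ (asymptotic_fun f d < 0)%E ->
  asymptotic_kernel f d.
Proof.
move=> fM Ny xd not_lt0; apply/eqP.
by rewrite eq_le (asymptotic_fun_le0 fM Ny xd) leNgt; exact/negP.
Qed.

Lemma asymptotic_fun_lt0_le_shift f g d (c : R) :
  (forall x, (g x <= f x + c%:E)%E) ->
  (asymptotic_fun f d < 0)%E -> (asymptotic_fun g d < 0)%E.
Proof.
move=> gfc /limf_einf_lt0[e e0 fe].
apply: (@le_lt_trans _ _ (- (e / 2))%:E); last by rewrite lte_fin; lra.
apply: limf_einf_le => V FV.
have large_t : filter_prod (nbhs d) +oo (fun p => 2 * `|c| / e < p.2).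
  exact: (filter_prod2 (FF := nbhs_filter d) (nbhs_pinfty_gt (num_real _))).
have [[w t] [Vp /= ct] /= ft] := fe _ (filterI FV large_t).
exists (w, t) => //=.
have t0 : (0 < t)%R by apply: le_lt_trans ct; rewrite divr_ge0 // ?mulr_ge0 // ltW.
apply: le_trans (lee_wpmul2r _ (gfc _)) _; first by rewrite lee_fin invr_ge0 ltW.
move: ft; case: (f (t *: w)) => [y| |] //=.
- rewrite -EFinD -!EFinM !lte_fin !lee_fin mulrDl => yt.
  suff : c / t <= e / 2 by lra.
  rewrite ler_pdivrMr //; rewrite ltr_pdivrMr // in ct.
  have := ler_norm c; nra.
- by rewrite gt0_mulye ?lte_fin ?invr_gt0 // ltNge leey.
- by rewrite gt0_mulNye ?leNye // lte_fin invr_gt0.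
Qed.

Lemma asymptotic_fun_lt0_of_ray f z d (c e : R) : 0 < e ->
  (forall s : R, 0 < s -> (f (z + s *: d)%R <= (c - s * e)%:E)%E) ->
  (asymptotic_fun f d < 0)%E.
Proof.
move=> e0 ray; apply: (@le_lt_trans _ _ (- (e / 2))%:E); last by rewrite lte_fin; lra.
apply: limf_einf_le => V FV.
have dz : (fun s => d + s^-1 *: z) @ +oo --> d.
  rewrite -[X in _ --> X]addr0 -(scale0r z).
  by apply: cvgD; [exact: cvg_cst | apply: cvgZ; [exact: cvgry_inv0 | exact: cvg_cst]].
have Vs : \forall s \near +oo, V (d + s^-1 *: z, s) by apply: (cvg_pair dz cvg_id).
have [s [Vs' cs]] := filter_ex (filterI Vs (nbhs_pinfty_gt (num_real (2 * `|c| / e)))).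
exists (d + s^-1 *: z, s) => //=.
have s0 : 0 < s by apply: le_lt_trans cs; rewrite divr_ge0 // ?mulr_ge0 // ltW.
have -> : s *: (d + s^-1 *: z) = z + s *: d.
  by rewrite scalerDr scalerA mulfV ?gt_eqF // scale1r addrC.
apply: le_trans (lee_wpmul2r _ (ray s s0)) _; first by rewrite lee_fin invr_ge0 ltW.
rewrite -EFinM lee_fin mulrBl [s * e]mulrC mulfK ?gt_eqF //.
suff : c / s <= e / 2 by lra.
rewrite ler_pdivrMr //; rewrite ltr_pdivrMr // in cs.
have := ler_norm c; nra.
Qed.

End asymptotic_fun_bounds.

Section convex_recession.
Context {R : realType} {n : nat}.
Implicit Types (f : 'cV[R]_n -> \bar R) (d w z : 'cV[R]_n).

(* [z + s *: (w - t^-1 *: z)] is the point of the segment [[z, t *: w]] at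
   parameter [s / t]. *)
Lemma convex_efun_chord_le f z w (lz ly s t : R) :
  convex_efun f -> f z = lz%:E -> f (t *: w) = ly%:E -> 0 < s -> s < t ->
  (f (z + s *: (w - t^-1 *: z))%R <= (`|lz| + s * (ly / t))%:E)%E.
Proof.
move=> fconv fz fw s0 st.
have t0 : 0 < t := lt_trans s0 st.
set th := s / t.
have th01 : 0 < th < 1 by rewrite divr_gt0 //= ltr_pdivrMr // mul1r.
have -> : z + s *: (w - t^-1 *: z) = th *: (t *: w) + (1 - th) *: z.
  by apply/matrixP => i j; rewrite !mxE /th; field; rewrite gt_eqF.
apply: le_trans (fconv _ _ _ th01) _.
rewrite fz fw -!EFinM -EFinD lee_fin.
have th_ly : th * ly = s * (ly / t) by rewrite /th; field; rewrite gt_eqF.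
have : (1 - th) * lz <= `|lz|.
  have := ler_norm lz; have := normr_ge0 lz; move: th01 => /andP[? ?]; nra.
lra.
Qed.

(* Directions [w] near [d] with [f (t *: w) / t < - e] bend the chords from [z]
   downwards; lower semicontinuity carries the bound to the limit ray. *)
Lemma convex_lsc_ray_bound f z d (lz : R) :
  convex_efun f -> lower_semicontinuous f -> (forall x, f x <> -oo%E) ->
  f z = lz%:E -> (asymptotic_fun f d < 0)%E ->
  exists2 e : R, 0 < e &
    forall s : R, 0 < s -> (f (z + s *: d)%R <= (`|lz| - s * e)%:E)%E.
Proof.
move=> fconv flsc fNy fz /limf_einf_lt0[e e0 fe]; exists e => // s s0.
rewrite leNgt; apply/negP => /flsc[W Wnbhs fW].
have chord_cvg : (fun p : 'cV[R]_n * R => z + s *: (p.1 - p.2^-1 *: z))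
    @ filter_prod (nbhs d) +oo --> z + s *: d.
  have -> : z + s *: d = z + s *: (d - 0 *: z) by rewrite scale0r subr0.
  apply: cvgD; first exact: cvg_cst.
  apply: cvgZ; first exact: cvg_cst.
  apply: cvgB; first exact: cvg_fst.
  by apply: cvgZ; [exact: cvgry_inv0 cvg_snd | exact: cvg_cst].
have large_t : filter_prod (nbhs d) +oo (fun p => s < p.2).
  exact: (filter_prod2 (FF := nbhs_filter d) (nbhs_pinfty_gt (num_real _))).
have Wchord : filter_prod (nbhs d) +oo
    (fun p => W (z + s *: (p.1 - p.2^-1 *: z))) := chord_cvg _ Wnbhs.
have [[w t] [/= Wp st] /= ft] := fe _ (filterI Wchord large_t).
have t0 : 0 < t := lt_trans s0 st.
move: ft (fNy (t *: w)); case fw : (f (t *: w)) => [ly| |] //= ft _.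
- have := lt_le_trans (fW _ Wp) (convex_efun_chord_le fconv fz fw s0 st).
  rewrite -EFinM lte_fin in ft; rewrite lte_fin.
  have : s * (ly / t) < s * - e by rewrite ltr_pM2l.
  lra.
- by rewrite gt0_mulye ?lte_fin ?invr_gt0 // ltNge leey in ft.
Qed.

End convex_recession.

Section escape_direction.
Context {R : realType} {n : nat} {T : Type} (G : set_system T) {PG : ProperFilter G}.
Variables (x : T -> 'cV[R]_n) (N : T -> R) (xb : 'cV[R]_n).
Hypothesis Ny : N @ G --> +oo.
Hypothesis xNxb : (fun k => (N k)^-1 *: x k) @ G --> xb.

Lemma cvg_scaled_mulmx_coord (r : nat) (B : 'M[R]_(r, n)) (i : 'I_r) :
  (fun k => (N k)^-1 * (B *m x k) i 0) @ G --> (B *m xb) i 0.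
Proof.
have -> : (fun k => (N k)^-1 * (B *m x k) i 0) =
          (fun k => (B *m ((N k)^-1 *: x k)) i 0).
  by apply: funext => k; rewrite -scalemxAr [in RHS]mxE.
exact: cvg_mulmx_coord.
Qed.

Lemma affine_sg_escape (r : nat) (B : 'M[R]_(r, n)) (b : 'cV[R]_r) (rho : R) :
  \forall k \near G, forall i,
    Num.sg ((B *m (x k - rho *: xb) - b) i 0) = Num.sg ((B *m x k - b) i 0).
Proof.
apply: filter_forall => i.
have Bi := @cvg_scaled_mulmx_coord _ B i.
apply: filterS (scaled_cvg_sg_shift Ny Bi rho (b i 0)) => k.
by rewrite mulmxBr -scalemxAr !mxE.
Qed.

Lemma polyhedral_escape (m : nat) (A : 'M[R]_(m, n)) (a : 'cV[R]_m) (rho : R) :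
  (\forall k \near G, forall i, (A *m x k) i 0 <= a i 0) ->
  (forall i, (A *m xb) i 0 <= 0) /\
  \forall k \near G, forall i, (A *m (x k - rho *: xb)) i 0 <= a i 0.
Proof.
move=> xA; have xAi i : \forall k \near G, (A *m x k) i 0 <= a i 0.
  by apply: filterS xA => k; apply.
split=> [i|].
  by apply: (scaled_cvg_le0 Ny (@cvg_scaled_mulmx_coord _ A i)); exact: xAi.
apply: filter_forall => i.
have Ai := @cvg_scaled_mulmx_coord _ A i.
apply: filterS (scaled_cvg_le_shift Ny Ai rho (xAi i)) => k.
by rewrite mulmxBr -scalemxAr !mxE.
Qed.

End escape_direction.

Section Phi_sign_pattern.
Context {R : realType} {r : nat} (lam : 'cV[R]_r) (Phi : 'cV[R]_r -> R).
Hypothesis PhiE : Phi = Phi0 lam \/ Phi = Phiplus lam.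

Lemma Phi_bounded : (forall i, 0 < lam i 0) ->
  forall u, 0 <= Phi u <= \sum_(i < r) lam i 0.
Proof.
move=> lam_gt0 u; have lam_ge0 i : 0 <= lam i 0 by exact: ltW.
by case: PhiE => ->; rewrite sumr_ge0 ?ler_sum // => i _; case: ifP.
Qed.

Lemma eq_Phi_sg (u v : 'cV[R]_r) :
  (forall i, Num.sg (u i 0) = Num.sg (v i 0)) -> Phi u = Phi v.
Proof.
move=> uv; case: PhiE => ->; apply: eq_bigr => i _.
  by rewrite -sgr_eq0 uv sgr_eq0.
by rewrite -sgr_gt0 uv sgr_gt0.
Qed.

End Phi_sign_pattern.

Section ALS_sums.
Context {R : realType} {n : nat} (L : 'cV[R]_n -> \bar R).
Hypothesis LNy : forall x, L x <> -oo%E.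

(* [LNy] is needed because [-oo + +oo = -oo] in [\bar R]. *)
Lemma lev_add_indicator (C : set 'cV[R]_n) (tau : R) (x : 'cV[R]_n) :
  lev (fun y => L y + indicator_fun C y)%E tau x <-> C x /\ lev L tau x.
Proof.
rewrite /lev /indicator_fun /=; case: asboolP => Cx.
  by rewrite adde0; split=> [|[]].
rewrite addey; last exact/eqP/LNy.
by split=> [|[/Cx]//]; rewrite leye_eq.
Qed.

Lemma ALS_add_Phi (r : nat) (B : 'M[R]_(r, n)) (b lam : 'cV[R]_r)
    (Phi : 'cV[R]_r -> R) :
  (forall i, 0 < lam i 0) -> (Phi = Phi0 lam \/ Phi = Phiplus lam) ->
  ALS L -> ALS (fun x => L x + (Phi (B *m x - b))%:E)%E.
Proof.
move=> lam_gt0 PhiE LALS rho rho0 tau x xb [M tauM] xlev Ny xNxb Hker.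
set S := \sum_(i < r) lam i 0.
have Phi_b := Phi_bounded PhiE lam_gt0.
set P := fun k => Phi (B *m x k - b).
have Llev k : lev L (tau k - P k) (x k).
  by rewrite /lev /= EFinB lee_suber_addr //; exact: xlev.
have LM k : (L (x k) <= M%:E)%E.
  apply: le_trans (Llev k) _; rewrite lee_fin.
  have := ler_norm (tau k); have := tauM k; have /andP[] := Phi_b (B *m x k - b).
  rewrite /P; lra.
have Lker : asymptotic_kernel L xb.
  apply: (asymptotic_kernel_escape LM Ny xNxb) => Llt.
  suff : (asymptotic_fun (fun x => L x + (Phi (B *m x - b))%:E) xb < 0)%E.
    by rewrite Hker ltxx.
  apply: (asymptotic_fun_lt0_le_shift (c := S)) Llt => y.
  apply: leeD2l; rewrite lee_fin.
  by have /andP[] := Phi_b (B *m y - b).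
have tauPb : exists M', forall k, `|tau k - P k| <= M'.
  exists (M + S) => k; apply: le_trans (ler_normB _ _) _.
  have /andP[P0 PS] := Phi_b (B *m x k - b).
  by rewrite (ger0_norm P0) lerD ?tauM.
have [k0 Lstab] := LALS rho rho0 _ x xb tauPb Llev Ny xNxb Lker.
have [k1 _ Pstab] := affine_sg_escape Ny xNxb B b rho.
exists (maxn k0 k1) => k; rewrite geq_max => /andP[k0k k1k].
rewrite /lev /= (eq_Phi_sg PhiE (Pstab _ k1k)) -lee_suber_addr // -EFinB.
exact: Lstab.
Qed.

Lemma ALS_add_indicator_polyhedral (C : set 'cV[R]_n) :
  lower_semicontinuous L -> convex_efun L -> ALS L -> polyhedral C ->
  edom L `&` C !=set0 -> ALS (fun x => L x + indicator_fun C x)%E.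
Proof.
move=> Llsc Lconv LALS [m [A [a CE]]] [z [zdom zC]].
move=> rho rho0 tau x xb [M tauM] xlev Ny xNxb Uker.
have /all_and2[xC Llev] k : C (x k) /\ lev L (tau k) (x k).
  exact/lev_add_indicator.
have xA : \forall k \near \oo, forall i, (A *m x k) i 0 <= a i 0.
  by apply: nearW => k; move: (xC k); rewrite CE.
have [Axb_le0 [k1 _ xrhoA]] := polyhedral_escape Ny xNxb rho xA.
have [lz Lz] : exists lz, L z = lz%:E.
  by move: zdom (@LNy z); rewrite /edom /=; case: (L z) => // lz; exists lz.
have Lker : asymptotic_kernel L xb.
  have LM k : (L (x k) <= M%:E)%E.
    by apply: le_trans (Llev k) _; rewrite lee_fin (le_trans (ler_norm _)).
  apply: (asymptotic_kernel_escape LM Ny xNxb).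
  move=> /(convex_lsc_ray_bound Lconv Llsc LNy Lz)[e e0 ray].
  suff : (asymptotic_fun (fun x => L x + indicator_fun C x) xb < 0)%E.
    by rewrite Uker ltxx.
  apply: (asymptotic_fun_lt0_of_ray (z := z) e0) => s s0.
  have zsC : C (z + s *: xb).
    rewrite CE => i; move: zC (Axb_le0 i); rewrite CE => /(_ i).
    rewrite mulmxDr -scalemxAr !mxE; nra.
  by rewrite /indicator_fun asboolT // adde0; exact: ray.
have [k0 Lstab] := LALS rho rho0 tau x xb (ex_intro _ M tauM) Llev Ny xNxb Lker.
exists (maxn k0 k1) => k; rewrite geq_max => /andP[k0k k1k].
by apply/lev_add_indicator; split; [rewrite CE; exact: xrhoA | exact: Lstab].
Qed.

End ALS_sums.

Theorem mainTheorem1 (R : realType) (n : nat) (L : 'cV[R]_n -> \bar R) :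
  proper_fun L -> lower_semicontinuous L ->
  (forall (r : nat) (B : 'M[R]_(r, n)) (b lam : 'cV[R]_r)
          (Phi : 'cV[R]_r -> R),
     (forall i : 'I_r, 0 < lam i 0) ->
     (Phi = Phi0 lam \/ Phi = Phiplus lam) ->
     ALS L ->
     ALS (fun x => (L x + (Phi (B *m x - b))%:E)%E))
  /\
  (forall C : set 'cV[R]_n,
     convex_efun L -> ALS L -> polyhedral C ->
     edom L `&` C !=set0 ->
     ALS (fun x => (L x + indicator_fun C x)%E)).
Proof.
move=> [LNy _] Llsc; split=> [r B b lam Phi|C Lconv].
  exact: ALS_add_Phi.
exact: ALS_add_indicator_polyhedral.
Qed.
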